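(* Let $R$ be a separative exchange ring in which $2$ is invertible, and let $a\in R$ be such that $a-a^3$ is regular. If $R(1-a^2)R=Rr(a)\cap \ell(a)R$, then $a$ is unit-regular.
   Context: All rings are associative with identity; modules are right modules. An element $x\in R$ is regular if $x=xyx$ for some $y\in R$, and unit-regular if $x=xux$ for some unit $u\in R$. $R$ is an exchange ring if for every $x\in R$ there is an idempotent $e\in xR$ with $1-e\in(1-x)R$. $R$ is separative if for all finitely generated projective right $R$-modules $A,B$: $A\oplus A\cong A\oplus B\cong B\oplus B$ implies $A\cong B$. $r(a)=\{x\in R: ax=0\}$, $\ell(a)=\{x\in R: xa=0\}$; $Rr(a)$, $\ell(a)R$, $R(1-a^2)R$ denote the two-sided ideals generated by $r(a)$, $\ell(a)$, $1-a^2$ respectively. *)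

(* Rings: R : pzRingType (associative, with 1, possibly zero).
   Right R-modules are encoded as left modules over the converse ring R^c
   (the scalar action  a *: m  stands for  m . a). *)
From mathcomp Require Import all_boot all_algebra.
Import GRing.Theory.
Set Implicit Arguments. Unset Strict Implicit. Unset Printing Implicit Defensive.
Local Open Scope ring_scope.

Section RingDefs.
Variable R : pzRingType.

Definition regular (x : R) : Prop := exists y : R, x = x * y * x.

Definition is_unit (u : R) : Prop := exists v : R, u * v = 1 /\ v * u = 1.

Definition unit_regular (x : R) : Prop :=
  exists u : R, is_unit u /\ x = x * u * x.

Definition exchange_ring : Prop :=
  forall x : R, exists e : R, e * e = e /\ (exists r, e = x * r)
                          /\ (exists s, 1 - e = (1 - x) * s).

Definition rann (a : R) : R -> Prop := fun x => a * x = 0.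
Definition lann (a : R) : R -> Prop := fun x => x * a = 0.

Definition ideal_gen (S : R -> Prop) : R -> Prop :=
  fun z => exists (n : nat) (x t y : 'I_n -> R),
    (forall i, S (t i)) /\ z = \sum_(i < n) x i * t i * y i.

End RingDefs.

Section ModDefs.
Variable R : pzRingType.

Definition rlinear (M N : lmodType R^c) (f : M -> N) : Prop :=
  forall (a : R^c) (x y : M), f (a *: x + y) = a *: f x + f y.

Definition mod_iso (M N : lmodType R^c) : Prop :=
  exists (f : M -> N) (g : N -> M),
    rlinear f /\ rlinear g /\ cancel f g /\ cancel g f.

Definition fg_projective (M : lmodType R^c) : Prop :=
  exists (n : nat) (f : M -> 'rV[R^c]_n) (g : 'rV[R^c]_n -> M),
    rlinear f /\ rlinear g /\ cancel f g.

Definition separative : Prop :=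
  forall A B : lmodType R^c, fg_projective A -> fg_projective B ->
    mod_iso (A * A)%type (A * B)%type -> mod_iso (A * B)%type (B * B)%type ->
    mod_iso A B.

End ModDefs.

(* Since 2 is a unit, the exchange property yields an involution u = 2e - 1 with u - a in
   (1 - a^2)R.  As 1 - a^2 is regular, (1 - a^2)R = pR for an idempotent p; with f = u p u we
   get u a - 1 in fR, and a triangular unit T turns a into T a = b + (1 - f) with b in the
   corner fRf.  The ideal hypothesis puts f in the ideals generated by r(T a) and l(T a), hence
   in those generated by f - g b and f - b g, where g is a reflexive inverse of b in fRf.  So fR
   is a summand of powers of (f - g b)R and of (f - b g)R, and separativity cancels
   g b R = b g R in  g b R + (f - g b)R = fR = b g R + (f - b g)R.  The resulting
   equivalence U of f - g b and f - b g completes b to the unit b + U + (1 - f), whose inverse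
   is an inner inverse of T a. *)

From HB Require Import structures.
From mathcomp Require Import all_boot all_algebra.
Import GRing.Theory.
Set Implicit Arguments. Unset Strict Implicit. Unset Printing Implicit Defensive.
Local Open Scope ring_scope.

Section Idempotents.
Variable R : pzRingType.
Implicit Types e f : R.

Definition idem_equiv e1 e2 : Prop := exists x y, y * x = e1 /\ x * y = e2.

Lemma idem_equivP e1 e2 : e1 * e1 = e1 -> e2 * e2 = e2 -> idem_equiv e1 e2 ->
  exists x y, [/\ e2 * x * e1 = x, e1 * y * e2 = y, y * x = e1 & x * y = e2].
Proof.
move=> e11 e22 [x [y [yx xy]]].
have xe1 : x * e1 = e2 * x by rewrite -yx -xy mulrA.
have ye2 : y * e2 = e1 * y by rewrite -yx -xy mulrA.
exists (e2 * x), (e1 * y); split.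
- by rewrite -!mulrA xe1 !mulrA !e22.
- by rewrite -!mulrA ye2 !mulrA !e11.
- by rewrite mulrA -(mulrA e1) ye2 !mulrA e11 -mulrA yx e11.
- by rewrite mulrA -(mulrA e2) xe1 !mulrA e22 -mulrA xy e22.
Qed.

Lemma idempotent_sub f e : f * f = f -> e * e = e -> f * e = e -> e * f = e ->
  (f - e) * (f - e) = f - e.
Proof. by move=> ff ee fe ef; rewrite mulrBr !mulrBl ff fe ef ee subrr subr0. Qed.

End Idempotents.

Ltac rearrangement_iso f g :=
  exists f, g; split; [|split; [|split]]; rewrite /rlinear /cancel; intros;
  repeat match goal with
    p : ?T |- _ => let T' := eval hnf in T in
                   lazymatch T' with prod _ _ => destruct p end end;
  reflexivity.

Section RightModules.
Variable R : pzRingType.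
Implicit Types A C M N P Q V W X Y : lmodType R^c.

Section RLinear.
Variables (M N : lmodType R^c) (f : M -> N).
Hypothesis lin_f : rlinear f.

Lemma rlinearD x y : f (x + y) = f x + f y.
Proof. by have := lin_f 1 x y; rewrite !scale1r. Qed.

Lemma rlinear0 : f 0 = 0.
Proof. by apply: (addrI (f 0)); rewrite addr0 -rlinearD addr0. Qed.

Lemma rlinearZ a x : f (a *: x) = a *: f x.
Proof. by have := lin_f a x 0; rewrite !addr0 rlinear0 addr0. Qed.

Lemma rlinearB x y : f (x - y) = f x - f y.
Proof. by rewrite rlinearD -scaleN1r rlinearZ scaleN1r. Qed.

Lemma rlinear_comp (K : lmodType R^c) (h : N -> K) : rlinear h -> rlinear (h \o f).
Proof. by move=> lin_h a x y /=; rewrite lin_f lin_h. Qed.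

End RLinear.

Lemma mod_iso_refl M : mod_iso M M.
Proof. by exists id, id. Qed.

Lemma mod_iso_sym M N : mod_iso M N -> mod_iso N M.
Proof. by case=> f [g [lf [lg [fK gK]]]]; exists g, f. Qed.

Lemma mod_iso_trans M N P : mod_iso M N -> mod_iso N P -> mod_iso M P.
Proof.
case=> f [g [lf [lg [fK gK]]]] [f' [g' [lf' [lg' [fK' gK']]]]].
exists (f' \o f), (g \o g'); do ?split; try exact: rlinear_comp.
- by move=> x /=; rewrite fK' fK.
- by move=> x /=; rewrite gK gK'.
Qed.

Lemma mod_iso_prod M M' N N' :
  mod_iso M M' -> mod_iso N N' -> mod_iso (M * N)%type (M' * N')%type.
Proof.
case=> f [g [lf [lg [fK gK]]]] [f' [g' [lf' [lg' [fK' gK']]]]].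
exists (fun p => (f p.1, f' p.2)), (fun p => (g p.1, g' p.2)); do ?split.
- by move=> a [x1 x2] [y1 y2] /=; rewrite lf lf'.
- by move=> a [x1 x2] [y1 y2] /=; rewrite lg lg'.
- by move=> [x1 x2] /=; rewrite fK fK'.
- by move=> [x1 x2] /=; rewrite gK gK'.
Qed.

Lemma mod_iso_prodC M N : mod_iso (M * N)%type (N * M)%type.
Proof. by rearrangement_iso (fun '((x, y) : M * N) => (y, x)) (fun '((y, x) : N * M) => (x, y)). Qed.

Definition retract X Y : Prop :=
  exists (s : X -> Y) (p : Y -> X), rlinear s /\ rlinear p /\ cancel s p.

Lemma mod_iso_retract M N : mod_iso M N -> retract M N.
Proof. by case=> f [g [lf [lg [fK gK]]]]; exists f, g. Qed.

Lemma retract_trans X Y Z : retract X Y -> retract Y Z -> retract X Z.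
Proof.
case=> s [p [ls [lp sK]]] [s' [p' [ls' [lp' sK']]]].
exists (s' \o s), (p \o p'); do ?split; try exact: rlinear_comp.
by move=> x /=; rewrite sK' sK.
Qed.

Lemma retract_fst X Y : retract X (X * Y)%type.
Proof.
exists (fun x => (x, 0)), fst; do ?split => // a x y.
by change ((a *: x + y, 0 : Y) = (a *: x + y, a *: (0 : Y) + 0)); rewrite scaler0 addr0.
Qed.

Lemma fg_projective_retract X Y : retract X Y -> fg_projective Y -> fg_projective X.
Proof. by move=> XY [n YR]; exists n; apply: retract_trans XY YR. Qed.

Lemma fg_projective_prod M N :
  fg_projective M -> fg_projective N -> fg_projective (M * N)%type.
Proof.
case=> n [f [g [lf [lg fK]]]] [n' [f' [g' [lf' [lg' fK']]]]].
exists (n + n')%N, (fun p => row_mx (f p.1) (f' p.2)),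
  (fun v => (g (lsubmx v), g' (rsubmx v))); do ?split.
- move=> a [x1 x2] [y1 y2] /=; rewrite lf lf'.
  by apply/matrixP => i j; rewrite !mxE; case: splitP => k _; rewrite !mxE.
- move=> a v w /=.
  by rewrite !linearP lg lg'.
- by move=> [x1 x2] /=; rewrite row_mxKl row_mxKr fK fK'.
Qed.

(* [mod_pow A m] is the sum of [m.+1] copies of [A]. *)
Fixpoint mod_pow A m : lmodType R^c :=
  if m is m'.+1 then (A * mod_pow A m')%type else A.

Lemma fg_projective_mod_pow A m : fg_projective A -> fg_projective (mod_pow A m).
Proof. by move=> pA; elim: m => //= m IHm; apply: fg_projective_prod. Qed.

Section FixedSubmodule.
Variables (M : lmodType R^c) (phi : M -> M).
Hypothesis lin_phi : rlinear phi.

Definition fixed : {pred M} := fun x => phi x == x.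

Lemma fixed_submod_closed : GRing.submod_closed fixed.
Proof.
split; first by rewrite unfold_in /fixed rlinear0.
by move=> a u v; rewrite !unfold_in /fixed lin_phi => /eqP-> /eqP->.
Qed.

HB.instance Definition _ := GRing.isSubmodClosed.Build R^c M fixed fixed_submod_closed.

(* The dummy dependency on [lin_phi] makes the module structure below, which needs it,
   canonical for this type. *)
Definition fix_mod : Type := (fun _ : rlinear phi => {x : M | x \in fixed}) lin_phi.
HB.instance Definition _ := [isSub of fix_mod for @sval M (fun x => x \in fixed)].
HB.instance Definition _ := [Choice of fix_mod by <:].
HB.instance Definition _ := [SubChoice_isSubLmodule of fix_mod by <:].

Lemma fix_modP (x : fix_mod) : phi (val x) = val x.
Proof. by apply/eqP; case: x. Qed.

Hypothesis phi_idem : forall x, phi (phi x) = phi x.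

Lemma to_fix_subproof x : phi x \in fixed.
Proof. by rewrite unfold_in /fixed phi_idem. Qed.

Definition to_fix x : fix_mod := exist _ (phi x) (to_fix_subproof x).

Lemma to_fix_rlinear : rlinear to_fix.
Proof. by move=> a x y; apply: val_inj; rewrite /= lin_phi. Qed.

Lemma retract_fix_mod : retract fix_mod M.
Proof.
exists val, to_fix; split; first by move=> a x y.
split; first exact: to_fix_rlinear.
by move=> x; apply: val_inj; rewrite /= fix_modP.
Qed.

End FixedSubmodule.

Section Complement.
Variables (X Y : lmodType R^c) (s : X -> Y) (p : Y -> X).
Hypotheses (ls : rlinear s) (lp : rlinear p) (sK : cancel s p).

Definition compl_proj y := y - s (p y).

Lemma compl_proj_rlinear : rlinear compl_proj.
Proof.
move=> a x y; rewrite /compl_proj lp ls scalerBr opprD !addrA; congr (_ - _).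
by rewrite -!addrA; congr (_ + _); rewrite addrC.
Qed.

Lemma compl_proj_idem y : compl_proj (compl_proj y) = compl_proj y.
Proof. by rewrite /compl_proj (rlinearB lp) sK subrr (rlinear0 ls) subr0. Qed.

Lemma mod_iso_retract_compl : mod_iso Y (X * fix_mod compl_proj_rlinear)%type.
Proof.
exists (fun y => (p y, to_fix compl_proj_rlinear compl_proj_idem y)),
  (fun q => s q.1 + val q.2); do ?split.
- by move=> a x y; rewrite lp (to_fix_rlinear compl_proj_rlinear compl_proj_idem).
- move=> a [x1 x2] [y1 y2] /=; rewrite ls scalerDr !addrA; congr (_ + _).
  by rewrite -!addrA; congr (_ + _); rewrite addrC.
- by move=> y /=; rewrite /compl_proj addrC subrK.
- move=> [x z] /=; have pz0 : p (val z) = 0.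
    by rewrite -(fix_modP z) /compl_proj (rlinearB lp) sK subrr.
  congr (_, _); first by rewrite (rlinearD lp) sK pz0 addr0.
  by apply: val_inj; rewrite /= /compl_proj (rlinearD lp) sK pz0 addr0 addrC addKr.
Qed.

End Complement.

Section SeparativeCancellation.
Hypothesis sepR : separative R.

Lemma separative_cancel_step V W X : fg_projective V -> fg_projective W -> fg_projective X ->
  mod_iso (V * (V * X))%type (W * (V * X))%type ->
  mod_iso (V * (X * X))%type (W * (X * X))%type ->
  mod_iso (V * X)%type (W * X)%type.
Proof.
move=> pV pW pX VX XX.
(* Separativity, applied to [V * X] and [W * X]. *)
have swap P Q : mod_iso ((P * X) * (Q * X))%type ((Q * (P * X)) * X)%type.
  by rearrangement_iso (fun '(((p, x), (q, x')) : (P * X) * (Q * X)) => ((q, (p, x)), x'))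
                       (fun '(((q, (p, x)), x') : (Q * (P * X)) * X) => ((p, x), (q, x'))).
have gather P Q : mod_iso ((P * X) * (Q * X))%type (Q * (P * (X * X)))%type.
  by rearrangement_iso (fun '(((p, x), (q, x')) : (P * X) * (Q * X)) => (q, (p, (x, x'))))
                       (fun '((q, (p, (x, x'))) : Q * (P * (X * X))) => ((p, x), (q, x'))).
apply: sepR; try exact: fg_projective_prod.
- apply: mod_iso_trans (swap _ _) _; apply: mod_iso_trans (mod_iso_sym (swap _ _)).
  exact: mod_iso_prod VX (mod_iso_refl _).
- apply: mod_iso_trans (gather _ _) _; apply: mod_iso_trans (mod_iso_sym (gather _ _)).
  exact: mod_iso_prod (mod_iso_refl _) XX.
Qed.

Lemma separative_cancel_pow V W m : fg_projective V -> fg_projective W ->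
  mod_iso (V * mod_pow V m)%type (W * mod_pow V m)%type -> mod_iso (V * V)%type (W * V)%type.
Proof.
move=> pV pW; elim: m => [//|m IHm] /= VX; apply: IHm.
apply: (separative_cancel_step pV pW (fg_projective_mod_pow m pV) VX).
case: m VX => [//|m] /= VX; set Y := mod_pow V m.
have shift P : mod_iso (P * ((V * Y) * (V * Y)))%type ((P * (V * (V * Y))) * Y)%type.
  by rearrangement_iso
    (fun '((p, ((v, y), (v', y'))) : P * ((V * Y) * (V * Y))) => ((p, (v, (v', y'))), y))
    (fun '(((p, (v, (v', y'))), y) : (P * (V * (V * Y))) * Y) => (p, ((v, y), (v', y')))).
apply: mod_iso_trans (shift _) _; apply: mod_iso_trans (mod_iso_sym (shift _)).
exact: mod_iso_prod VX (mod_iso_refl _).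
Qed.

Lemma separative_cancel_retract V W C m : fg_projective V -> fg_projective W ->
  mod_iso (V * C)%type (W * C)%type -> retract C (mod_pow V m) ->
  mod_iso (V * V)%type (W * V)%type.
Proof.
move=> pV pW VC [s [p [ls [lp sK]]]].
have := mod_iso_retract_compl ls lp sK; set C' := fix_mod _ => powVC.
have assoc P : mod_iso (P * (C * C'))%type ((P * C) * C')%type.
  by rearrangement_iso (fun '((p, (c, c')) : P * (C * C')) => ((p, c), c'))
                       (fun '(((p, c), c') : (P * C) * C') => (p, (c, c'))).
apply: (separative_cancel_pow (m := m) pV pW).
apply: mod_iso_trans (mod_iso_prod (mod_iso_refl _) powVC) _.
apply: mod_iso_trans (assoc _) _.
apply: mod_iso_trans (mod_iso_prod VC (mod_iso_refl _)) _.
apply: mod_iso_trans (mod_iso_sym (assoc _)) _.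
exact: mod_iso_prod (mod_iso_refl _) (mod_iso_sym powVC).
Qed.

Lemma separative_cancel V W C m m' : fg_projective V -> fg_projective W ->
  mod_iso (V * C)%type (W * C)%type ->
  retract C (mod_pow V m) -> retract C (mod_pow W m') -> mod_iso V W.
Proof.
move=> pV pW VC CV CW; apply: sepR => //.
- exact: mod_iso_trans (separative_cancel_retract pV pW VC CV) (mod_iso_prodC _ _).
- exact: mod_iso_sym (separative_cancel_retract pW pV (mod_iso_sym VC) CW).
Qed.

End SeparativeCancellation.

(* The right regular module [R_R]. *)
Definition RR : lmodType R^c := R^c^o.

Lemma fg_projective_RR : fg_projective RR.
Proof.
exists 1%N, (fun x : RR => \row_(j < 1) (x : R^c)), (fun v => (v 0 0 : RR)); do ?split.
- by move=> a x y; apply/rowP => j; rewrite !mxE.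
- by move=> a v w; rewrite !mxE.
- by move=> x; rewrite mxE.
Qed.

Definition lmul (c : R) (x : RR) : RR := (c * (x : R) : R).

Lemma lmul_rlinear c : rlinear (lmul c).
Proof. by move=> a x y; rewrite /lmul /= mulrDr mulrA. Qed.

Lemma lmul_idem e : e * e = e -> forall x, lmul e (lmul e x) = lmul e x.
Proof. by move=> ee x; rewrite /lmul mulrA ee. Qed.

(* The right ideal [eR], for [e] idempotent. *)
Definition proj_mod (e : R) : lmodType R^c := fix_mod (lmul_rlinear e).

Section ProjectiveIdeals.
Implicit Types e f n : R.

Lemma proj_modP e (v : proj_mod e) : e * (val v : R) = val v.
Proof. exact: fix_modP v. Qed.

Lemma val_proj_modZ e (a : R^c) (v : proj_mod e) : (val (a *: v) : R) = (val v : R) * (a : R).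
Proof. by []. Qed.

Lemma in_proj_mod_subproof e z : e * z = z -> (z : RR) \in fixed (lmul e).
Proof. by move=> ez; rewrite unfold_in /fixed /lmul /= ez. Qed.

Definition in_proj_mod e z (ez : e * z = z) : proj_mod e :=
  exist _ (z : RR) (in_proj_mod_subproof ez).

Definition to_proj_mod e (ee : e * e = e) : RR -> proj_mod e :=
  to_fix (lmul_rlinear e) (lmul_idem ee).

Lemma to_proj_mod_rlinear e (ee : e * e = e) : rlinear (to_proj_mod ee).
Proof. exact: to_fix_rlinear. Qed.

Lemma fg_projective_proj_mod e : e * e = e -> fg_projective (proj_mod e).
Proof.
by move=> ee; apply: fg_projective_retract fg_projective_RR; apply: retract_fix_mod (lmul_idem ee).
Qed.

Lemma idem_equiv_mod_iso e1 e2 : e1 * e1 = e1 -> e2 * e2 = e2 ->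
  idem_equiv e1 e2 -> mod_iso (proj_mod e1) (proj_mod e2).
Proof.
move=> e11 e22 /idem_equivP [] // x [y [e2xe1 e1ye2 yx xy]].
have xP (v : proj_mod e1) : e2 * (x * val v) = x * val v by rewrite -e2xe1 !mulrA e22.
have yP (v : proj_mod e2) : e1 * (y * val v) = y * val v by rewrite -e1ye2 !mulrA e11.
exists (fun v => in_proj_mod (xP v)), (fun v => in_proj_mod (yP v)); do ?split.
- by move=> a u v; apply: val_inj; rewrite /= mulrDr mulrA.
- by move=> a u v; apply: val_inj; rewrite /= mulrDr mulrA.
- by move=> v; apply: val_inj; rewrite /= mulrA yx proj_modP.
- by move=> v; apply: val_inj; rewrite /= mulrA xy proj_modP.
Qed.

Lemma mod_iso_idem_equiv e1 e2 : e1 * e1 = e1 -> e2 * e2 = e2 ->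
  mod_iso (proj_mod e1) (proj_mod e2) -> idem_equiv e1 e2.
Proof.
move=> e11 e22 [f [g [lf [lg [fK gK]]]]].
set E1 : proj_mod e1 := in_proj_mod e11; set E2 : proj_mod e2 := in_proj_mod e22.
have E1gen (v : proj_mod e1) : v = (val v : R^c) *: E1.
  by apply: val_inj; rewrite val_proj_modZ /= proj_modP.
have E2gen (v : proj_mod e2) : v = (val v : R^c) *: E2.
  by apply: val_inj; rewrite val_proj_modZ /= proj_modP.
exists (val (f E1)), (val (g E2)); split.
- by rewrite -val_proj_modZ -(rlinearZ lg) -E2gen fK.
- by rewrite -val_proj_modZ -(rlinearZ lf) -E1gen gK.
Qed.

Lemma mod_iso_proj_mod_sub f e : f * f = f -> e * e = e -> f * e = e -> e * f = e ->
  mod_iso (proj_mod f) (proj_mod e * proj_mod (f - e))%type.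
Proof.
move=> ff ee fe ef; have fe_idem := idempotent_sub ff ee fe ef.
have sumP (v : proj_mod e * proj_mod (f - e)) : f * (val v.1 + val v.2) = val v.1 + val v.2.
  rewrite mulrDr -{1}(proj_modP v.1) -{1}(proj_modP v.2) !mulrA fe mulrBr ff fe.
  by rewrite proj_modP -{2}(proj_modP v.2).
exists (fun v => (to_proj_mod ee (val v), to_proj_mod fe_idem (val v))),
  (fun v => in_proj_mod (sumP v)); do ?split.
- by move=> a u v; congr (_, _); apply: val_inj; rewrite /= /lmul /= mulrDr mulrA.
- by move=> a [u1 u2] [v1 v2]; apply: val_inj; rewrite /= scalerDr addrACA.
- move=> v; apply: val_inj; rewrite /= /lmul /=.
  change (e * (val v : R) + (f - e) * (val v : R) = val v).
  by rewrite -mulrDl addrC subrK proj_modP.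
- move=> [u v]; congr (_, _); apply: val_inj; rewrite /= /lmul /= mulrDr.
  + rewrite -{1}(proj_modP u) -{1}(proj_modP v) !mulrA ee mulrBr ef ee subrr mul0r.
    by rewrite addr0 proj_modP.
  + rewrite -{1}(proj_modP u) -{1}(proj_modP v) !mulrA mulrBl fe ee subrr mul0r.
    by rewrite add0r fe_idem proj_modP.
Qed.

Lemma lmul_factor_mod_pow n k (x y : 'I_k -> R) : n * n = n ->
  exists m (s : RR -> mod_pow (proj_mod n) m) (p : mod_pow (proj_mod n) m -> RR),
    [/\ rlinear s, rlinear p & forall r, p (s r) = lmul (\sum_(i < k) x i * n * y i) r].
Proof.
move=> nn; elim: k x y => [|k IHk] x y.
  exists 0%N, (fun _ => 0), (fun _ => 0); split.
  - by move=> a u v; rewrite scaler0 addr0.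
  - by move=> a u v; rewrite scaler0 addr0.
  - by move=> r; rewrite /lmul big_ord0 mul0r.
have [m [s [p [ls lp sp]]]] := IHk (x \o widen_ord (leqnSn k)) (y \o widen_ord (leqnSn k)).
exists m.+1, (fun r => (to_proj_mod nn (lmul (y ord_max) r), s r)),
  (fun q => lmul (x ord_max) (val q.1) + p q.2); split.
- move=> a u v /=; congr (_, _); last exact: ls.
  by rewrite lmul_rlinear to_proj_mod_rlinear.
- by move=> a [u1 u2] [v1 v2] /=; rewrite lp lmul_rlinear /= scalerDr addrACA.
- by move=> r /=; rewrite sp big_ord_recr /= /lmul /= mulrDl addrC !mulrA.
Qed.

Lemma retract_proj_mod_ideal_gen n f : n * n = n -> f * f = f ->
  ideal_gen (eq^~ n) f -> exists m, retract (proj_mod f) (mod_pow (proj_mod n) m).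
Proof.
move=> nn ff [k [x [t [y [tn fsum]]]]].
have {t tn}fsum : f = \sum_(i < k) x i * n * y i.
  by rewrite fsum; apply: eq_bigr => i _; rewrite tn.
have [m [s [p [ls lp sp]]]] := lmul_factor_mod_pow x y nn.
exists m, (fun v => s (val v)), (fun w => to_proj_mod ff (p w)); do ?split.
- by move=> a u v; rewrite -ls.
- by move=> a u v; rewrite lp to_proj_mod_rlinear.
- by move=> v; apply: val_inj; rewrite /= /lmul /= sp /lmul -fsum mulrA ff proj_modP.
Qed.

End ProjectiveIdeals.
End RightModules.

Section Corner.
Variables (R : pzRingType) (f b g : R).
Hypotheses (ff : f * f = f) (fb : f * b = b) (bf : b * f = b) (fg : f * g = g) (gf : g * f = g).
Hypotheses (bgb : b * g * b = b) (gbg : g * b * g = g).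

Let gb_idem : g * b * (g * b) = g * b. Proof. by rewrite mulrA gbg. Qed.
Let bg_idem : b * g * (b * g) = b * g. Proof. by rewrite mulrA bgb. Qed.
Let f_gb : f * (g * b) = g * b. Proof. by rewrite mulrA fg. Qed.
Let gb_f : g * b * f = g * b. Proof. by rewrite -mulrA bf. Qed.
Let f_bg : f * (b * g) = b * g. Proof. by rewrite mulrA fb. Qed.
Let bg_f : b * g * f = b * g. Proof. by rewrite -mulrA gf. Qed.

Lemma idem_equiv_corner_compl : separative R ->
  ideal_gen (eq^~ (f - g * b)) f -> ideal_gen (eq^~ (f - b * g)) f ->
  idem_equiv (f - g * b) (f - b * g).
Proof.
move=> sepR fI1 fI2.
have n1_idem := idempotent_sub ff gb_idem f_gb gb_f.
have n2_idem := idempotent_sub ff bg_idem f_bg bg_f.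
have f_split1 := mod_iso_proj_mod_sub ff gb_idem f_gb gb_f.
have f_split2 := mod_iso_proj_mod_sub ff bg_idem f_bg bg_f.
have gb_bg : mod_iso (proj_mod (g * b)) (proj_mod (b * g)).
  by apply: idem_equiv_mod_iso => //; exists b, g.
have cancel_hyp : mod_iso (proj_mod (f - g * b) * proj_mod (g * b))%type
                          (proj_mod (f - b * g) * proj_mod (g * b))%type.
  apply: mod_iso_trans (mod_iso_prodC _ _) _.
  apply: mod_iso_trans (mod_iso_sym f_split1) _.
  apply: mod_iso_trans f_split2 _.
  apply: mod_iso_trans (mod_iso_prod (mod_iso_sym gb_bg) (mod_iso_refl _)) _.
  exact: mod_iso_prodC.
have gb_f_retract : retract (proj_mod (g * b)) (proj_mod f).
  exact: retract_trans (retract_fst _ _) (mod_iso_retract (mod_iso_sym f_split1)).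
have [m fn1] := retract_proj_mod_ideal_gen n1_idem ff fI1.
have [m' fn2] := retract_proj_mod_ideal_gen n2_idem ff fI2.
apply: mod_iso_idem_equiv => //.
apply: (separative_cancel sepR (fg_projective_proj_mod n1_idem) (fg_projective_proj_mod n2_idem)).
- exact: cancel_hyp.
- exact: retract_trans gb_f_retract fn1.
- exact: retract_trans gb_f_retract fn2.
Qed.

(* The equivalence [U : f - g b ~ f - b g] completes [b] to the unit [b + U + (1 - f)]. *)
Lemma unit_regular_corner : idem_equiv (f - g * b) (f - b * g) -> unit_regular (b + (1 - f)).
Proof.
move=> /(idem_equivP (idempotent_sub ff gb_idem f_gb gb_f) (idempotent_sub ff bg_idem f_bg bg_f)).
move=> [U [V [UP VP VU UV]]].
have f_n1 : f * (f - g * b) = f - g * b by rewrite mulrBr ff f_gb.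
have n1_f : (f - g * b) * f = f - g * b by rewrite mulrBl ff gb_f.
have f_n2 : f * (f - b * g) = f - b * g by rewrite mulrBr ff f_bg.
have n2_f : (f - b * g) * f = f - b * g by rewrite mulrBl ff bg_f.
have g_n2 : g * (f - b * g) = 0 by rewrite mulrBr gf mulrA gbg subrr.
have n1_g : (f - g * b) * g = 0 by rewrite mulrBl fg gbg subrr.
have b_n1 : b * (f - g * b) = 0 by rewrite mulrBr bf mulrA bgb subrr.
have n2_b : (f - b * g) * b = 0 by rewrite mulrBl fb bgb subrr.
have gU : g * U = 0 by rewrite -UP !mulrA g_n2 !mul0r.
have Ug : U * g = 0 by rewrite -UP -!mulrA n1_g !mulr0.
have bV : b * V = 0 by rewrite -VP !mulrA b_n1 !mul0r.
have Vb : V * b = 0 by rewrite -VP -!mulrA n2_b !mulr0.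
have fU : f * U = U by rewrite -UP !mulrA f_n2.
have Uf : U * f = U by rewrite -UP -!mulrA n1_f.
have fV : f * V = V by rewrite -VP !mulrA f_n1.
have Vf : V * f = V by rewrite -VP -!mulrA n2_f.
move EF : (1 - f) => F.
have compl_l x : f * x = x -> F * x = 0 by move=> fx; rewrite -EF mulrBl mul1r fx subrr.
have compl_r x : x * f = x -> x * F = 0 by move=> xf; rewrite -EF mulrBr mulr1 xf subrr.
have FF : F * F = F by rewrite -{1}EF mulrBl mul1r compl_r ?subr0.
have Fb := compl_l _ fb; have Fg := compl_l _ fg; have FU := compl_l _ fU; have FV := compl_l _ fV.
have bF := compl_r _ bf; have gF := compl_r _ gf; have UF := compl_r _ Uf; have VF := compl_r _ Vf.
exists (g + V + F); split.
  exists (b + U + F); split.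
  - rewrite !mulrDl !mulrDr gU Vb VU gF VF Fb FU FF !addr0 !add0r.
    by rewrite -EF (addrC (g * b)) subrK addrC subrK.
  - rewrite !mulrDl !mulrDr bV Ug UV bF UF Fg FV FF !addr0 !add0r.
    by rewrite -EF (addrC (b * g)) subrK addrC subrK.
have -> : (b + F) * (g + V + F) = b * g + F.
  by rewrite !mulrDl !mulrDr bV bF Fg FV FF !addr0 !add0r.
by rewrite mulrDl !mulrDr bgb -mulrA gF mulr0 Fb FF addr0 add0r.
Qed.

End Corner.

Section UnitRegularity.
Variable R : pzRingType.
Implicit Types a b f t u v x y z T : R.

Lemma ideal_gen_mul (S : R -> Prop) x t y : S t -> ideal_gen S (x * t * y).
Proof.
by move=> St; exists 1%N, (fun=> x), (fun=> t), (fun=> y); rewrite big_ord1.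
Qed.

Lemma ideal_gen_factor (S S' : R -> Prop) (l m r : R -> R) :
  (forall t, S t -> S' (m t) /\ t = l t * m t * r t) ->
  forall z, ideal_gen S z -> ideal_gen S' z.
Proof.
move=> Sfactor z [n [x [t [y [St ->]]]]].
exists n, (fun i => x i * l (t i)), (fun i => m (t i)), (fun i => r (t i) * y i); split.
  by move=> i; have [] := Sfactor _ (St i).
apply: eq_bigr => i _; have [_ {1}->] := Sfactor _ (St i).
by rewrite !mulrA.
Qed.

Lemma is_unit_mul u v : is_unit u -> is_unit v -> is_unit (u * v).
Proof.
move=> [u' [uu' u'u]] [v' [vv' v'v]]; exists (v' * u'); split.
- by rewrite mulrA -(mulrA u) vv' mulr1.
- by rewrite mulrA -(mulrA v') u'u mulr1.
Qed.

Lemma regular_mull T a : is_unit T -> regular a -> regular (T * a).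
Proof.
move=> [T' [_ T'T]] [z aza]; exists (z * T').
by rewrite !mulrA -(mulrA _ T') T'T mulr1 -(mulrA T) -(mulrA T) -aza.
Qed.

Lemma unit_regular_mull T a : is_unit T -> unit_regular (T * a) -> unit_regular a.
Proof.
move=> [T' [TT' T'T]] [u [unit_u Ta]]; exists (u * T); split.
  by apply: is_unit_mul => //; exists T'.
by rewrite -[LHS]mul1r -T'T -mulrA Ta !mulrA T'T mul1r.
Qed.

Lemma ideal_gen_rann_mull T a z : ideal_gen (rann a) z -> ideal_gen (rann (T * a)) z.
Proof.
apply: (ideal_gen_factor (l := fun=> 1) (m := id) (r := fun=> 1)) => t at0.
by rewrite /rann -mulrA at0 mulr0 mulr1 mul1r.
Qed.

Lemma ideal_gen_lann_mull T a z : is_unit T ->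
  ideal_gen (lann a) z -> ideal_gen (lann (T * a)) z.
Proof.
case=> T' [TT' T'T].
apply: (ideal_gen_factor (l := fun=> 1) (m := fun t => t * T') (r := fun=> T)) => t ta0.
by rewrite /lann mulrA -(mulrA t) T'T mulr1 mul1r -mulrA T'T mulr1.
Qed.

Lemma mull_corner_add_compl f b : f * f = f -> f * b = b -> f * (b + (1 - f)) = b.
Proof. by move=> ff fb; rewrite mulrDr mulrBr mulr1 ff subrr addr0. Qed.

Lemma mulr_corner_add_compl f b : f * f = f -> b * f = b -> (b + (1 - f)) * f = b.
Proof. by move=> ff bf; rewrite mulrDl mulrBl mul1r ff subrr addr0. Qed.

Lemma corner_regular_inverse f b : f * f = f -> f * b = b -> b * f = b ->
  regular (b + (1 - f)) ->
  exists g, [/\ f * g = g, g * f = g, b * g * b = b & g * b * g = g].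
Proof.
move=> ff fb bf; set c := b + (1 - f) => -[z czc].
have fc : f * c = b by exact: mull_corner_add_compl.
have cf : c * f = b by exact: mulr_corner_add_compl.
have bzb : b * z * b = b.
  rewrite -{1}fc -{1}cf; transitivity (f * (c * z * c) * f); first by rewrite !mulrA.
  by rewrite -czc fc bf.
set g0 := f * z * f.
have fg0 : f * g0 = g0 by rewrite /g0 !mulrA ff.
have g0f : g0 * f = g0 by rewrite /g0 -!mulrA ff.
have bg0b : b * g0 * b = b by rewrite /g0 !mulrA bf -(mulrA _ f b) fb bzb.
clearbody g0.
have g0bg0b : g0 * b * g0 * b = g0 * b by rewrite -(mulrA g0 b g0) -mulrA bg0b.
exists (g0 * b * g0); split.
- by rewrite !mulrA fg0.
- by rewrite -!mulrA g0f.
- by rewrite !mulrA !bg0b.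
- by rewrite g0bg0b !mulrA g0bg0b.
Qed.

Theorem separative_unit_regular_corner f b : separative R ->
  f * f = f -> f * b = b -> b * f = b -> regular (b + (1 - f)) ->
  ideal_gen (rann (b + (1 - f))) f -> ideal_gen (lann (b + (1 - f))) f ->
  unit_regular (b + (1 - f)).
Proof.
move=> sepR ff fb bf c_reg fIr fIl.
have [g [fg gf bgb gbg]] := corner_regular_inverse ff fb bf c_reg.
apply: (unit_regular_corner ff fb bf fg gf bgb gbg).
apply: (idem_equiv_corner_compl ff fb bf fg gf bgb gbg sepR).
- apply: (ideal_gen_factor (l := fun=> 1) (m := fun=> f - g * b) (r := id) _ fIr).
  move=> t ct0; split => //.
  have bt0 : b * t = 0 by rewrite -(mull_corner_add_compl ff fb) -mulrA ct0 mulr0.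
  have ft : f * t = t.
    apply/eqP; rewrite eq_sym -subr_eq0 -[t in t - _]mul1r -mulrBl -ct0.
    by rewrite (mulrDl b) bt0 add0r.
  by rewrite mul1r mulrBl ft -mulrA bt0 mulr0 subr0.
- apply: (ideal_gen_factor (l := id) (m := fun=> f - b * g) (r := fun=> 1) _ fIl).
  move=> t tc0; split => //.
  have tb0 : t * b = 0 by rewrite -(mulr_corner_add_compl ff bf) mulrA tc0 mul0r.
  have tf : t * f = t.
    apply/eqP; rewrite eq_sym -subr_eq0 -[t in t - _]mulr1 -mulrBr -tc0.
    by rewrite (mulrDr t b) tb0 add0r.
  by rewrite mulr1 mulrBr tf mulrA tb0 mul0r subr0.
Qed.

End UnitRegularity.

Section Reduction.
Variable R : pzRingType.
Implicit Types a f k : R.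

Lemma regular_of_regular_sub_cube a : regular (a - a ^+ 3) -> regular a.
Proof.
set d := a - a ^+ 3 => -[z dzd].
have ay : a * (1 - a ^+ 2) = d by rewrite mulrBr mulr1 -exprS.
have ya : (1 - a ^+ 2) * a = d by rewrite mulrBl mul1r -exprSr.
exists (a + (1 - a ^+ 2) * z * (1 - a ^+ 2)).
rewrite mulrDr mulrDl !mulrA ay -(mulrA (d * z)) ya -dzd -expr2 -exprSr.
by rewrite addrC subrK.
Qed.

Lemma regular_subX2_of_regular_sub_cube a : regular (a - a ^+ 3) -> regular (1 - a ^+ 2).
Proof.
set d := a - a ^+ 3 => -[z dzd].
have ay : a * (1 - a ^+ 2) = d by rewrite mulrBr mulr1 -exprS.
have ya : (1 - a ^+ 2) * a = d by rewrite mulrBl mul1r -exprSr.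
have ad : a * d = d * a by rewrite -{1}ya mulrA ay.
have a2y : a ^+ 2 * (1 - a ^+ 2) = d * a by rewrite expr2 -mulrA ay ad.
move: ay ya a2y; move Ey: (1 - a ^+ 2) => y ay ya a2y.
exists (1 + a * z * a ^+ 2).
rewrite mulrDr mulr1 mulrDl !mulrA ya -(mulrA (d * z * a)) ay -(mulrA (d * z)) ad mulrA.
rewrite -dzd -a2y.
by rewrite -mulrDl -Ey subrK mul1r.
Qed.

(* The exchange idempotent [e] of [x = (1 + a)/2] satisfies [e - x \in (1 - a^2)R], because
   [x (1 - x) = (1 - x) x = (1 - a^2)/4]. *)
Lemma exchange_involution a : exchange_ring R -> is_unit (2%:R : R) ->
  exists u r, u * u = 1 /\ u - a = (1 - a ^+ 2) * r.
Proof.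
move=> exR [w [two_w w_two]].
have wC r : w * r = r * w.
  have twoC : 2%:R * r = r * 2%:R by rewrite mulr_natl mulr_natr.
  by rewrite -[LHS]mulr1 -two_w mulrA -(mulrA w r) -twoC mulrA w_two mul1r.
have wwC p q : (w * p) * (w * q) = w * w * (p * q).
  by rewrite -mulrA (mulrA p) -(wC p) -(mulrA w p) mulrA.
have wwC' q : w * w * q = q * (w * w) by rewrite -mulrA wC wC -mulrA.
set x := w * (1 + a).
have xx : x *+ 2 = 1 + a by rewrite /x -mulrnAl -mulr_natr w_two mul1r.
have x_compl : 1 - x = w * (1 - a).
  by rewrite -{1}w_two /x -mulrBr [2%:R]mulr2n opprD addrA addrK.
have x_mul_compl : x * (1 - x) = w * w * (1 - a ^+ 2).
  by rewrite x_compl wwC mulrDl mul1r (mulrBr a) mulr1 -expr2 addrA subrK.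
have compl_mul_x : (1 - x) * x = w * w * (1 - a ^+ 2).
  by rewrite x_compl wwC mulrBl mul1r (mulrDr a) mulr1 -expr2 opprD addrA addrK.
have [e [ee [[r er] [s es]]]] := exR x.
have ex : e - x = (1 - a ^+ 2) * (w * w * (r - s)).
  have -> : e - x = (1 - x) * e - x * (1 - e).
    by rewrite mulrBl mul1r mulrBr mulr1 opprB addrA subrK.
  rewrite {1}er es (mulrA (1 - x)) compl_mul_x (mulrA x) x_mul_compl -mulrBr.
  by rewrite wwC' -mulrA.
exists (e *+ 2 - 1), ((w * w * (r - s)) *+ 2); split.
  rewrite mulrBl mulrBr mulr1 mul1r mulrnAl mulrnAr ee [e *+ 2 *+ 2]mulr2n addrK.
  by rewrite opprB addrC subrK.
by rewrite -addrA -opprD -xx -mulrnBl ex mulrnAr.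
Qed.

Lemma triangular_unit f k : f * f = f -> f * k = k ->
  is_unit (1 - f * k * (1 - f)) /\ (1 - f * k * (1 - f)) * (1 + k) = 1 + f * k * f.
Proof.
move=> ff fk; set n := f * k * (1 - f).
have compl_f : (1 - f) * f = 0 by rewrite mulrBl mul1r ff subrr.
have nn : n * n = 0 by rewrite /n -!mulrA (mulrA (1 - f) f) compl_f mul0r !mulr0.
have nk : n * k = 0 by rewrite /n -mulrA mulrBl mul1r fk subrr mulr0.
split.
  exists (1 + n); split.
  - by rewrite mulrBl mul1r mulrDr mulr1 nn addr0 addrK.
  - by rewrite mulrDl mul1r mulrBr mulr1 nn subr0 subrK.
rewrite mulrBl mul1r mulrDr mulr1 nk addr0 /n mulrBr mulr1 fk opprB.
by rewrite addrCA addrK addrC.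
Qed.

(* [f = u p u] with [u] the involution of [exchange_involution] and [pR = (1 - a^2)R]; then
   [u a = 1 + k] with [k \in fR], and [T] is the triangular unit times [u]. *)
Lemma unit_multiple_corner_form a : exchange_ring R -> is_unit (2%:R : R) ->
  regular (1 - a ^+ 2) ->
  exists f T b, [/\ f * f = f, f * b = b, b * f = b, is_unit T & T * a = b + (1 - f)]
                /\ ideal_gen (eq^~ (1 - a ^+ 2)) f.
Proof.
move=> exR unit2 [z yzy].
have [u [r [uu ua]]] := exchange_involution a exR unit2.
set y := 1 - a ^+ 2 in yzy ua *.
have [p [pp py pdef]] : exists p, [/\ p * p = p, p * y = y & p = y * z].
  by exists (y * z); split; rewrite // ?mulrA -yzy.
have [f [ff fdef]] : exists f, f * f = f /\ f = u * p * u.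
  exists (u * p * u); split => //.
  by rewrite !mulrA -(mulrA _ u u) uu mulr1 -(mulrA _ p p) pp.
have [k [uak fk]] : exists k, u * a = 1 + k /\ f * k = k.
  exists (u * a - 1); split; first by rewrite addrC subrK.
  have -> : u * a - 1 = - (u * (y * r)) by rewrite -ua mulrBr uu opprB.
  by rewrite mulrN fdef -!mulrA (mulrA u u) uu mul1r (mulrA p y) py.
have [unit_T0 T0a] := triangular_unit ff fk.
exists f, ((1 - f * k * (1 - f)) * u), (f + f * k * f); split; last first.
  have -> : f = u * y * (z * u) by rewrite fdef pdef !mulrA.
  exact: ideal_gen_mul.
split => //.
- by rewrite mulrDr ff !mulrA ff.
- by rewrite mulrDl ff -!mulrA ff.
- by apply: is_unit_mul unit_T0 _; exists u.
- by rewrite -(mulrA _ u a) uak T0a addrAC subrKC.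
Qed.

End Reduction.

Unset Implicit Arguments.

Theorem corollary2p6 (R : pzRingType) (a : R) :
  separative R -> exchange_ring R -> is_unit (2%:R : R) ->
  regular (a - a ^+ 3) ->
  (forall z : R, ideal_gen (fun w : R => w = 1 - a ^+ 2) z <->
     (ideal_gen (rann a) z /\ ideal_gen (lann a) z)) ->
  unit_regular a.
Proof.
move=> sepR exR unit2 reg_d ideal_eq.
have [f [T [b [[ff fb bf unit_T Ta] fI]]]] :=
  unit_multiple_corner_form exR unit2 (regular_subX2_of_regular_sub_cube reg_d).
have [fIr fIl] := (ideal_eq f).1 fI.
apply: (unit_regular_mull unit_T); rewrite Ta.
apply: separative_unit_regular_corner => //; rewrite -Ta.
- exact: regular_mull unit_T (regular_of_regular_sub_cube reg_d).
- exact: ideal_gen_rann_mull.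
- exact: ideal_gen_lann_mull.
Qed.
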